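(* There exist a total pca and a nontotal pca which are isomorphic.
   Context: A partial combinatory algebra (pca) is a set $A$ with a partial binary application admitting $K,S\in A$ with $Kab=a$, $Sab{\downarrow}$, $Sabc\simeq ac(bc)$; it is total if application is everywhere defined. An applicative morphism $\gamma:A\to B$ is a function from $A$ to nonempty subsets of $B$ with some $r\in B$ such that $aa'{\downarrow}$, $b\in\gamma(a)$, $b'\in\gamma(a')$ imply $rbb'{\downarrow}$ and $rbb'\in\gamma(aa')$; composition is $(\delta\gamma)(a)=\bigcup_{b\in\gamma(a)}\delta(b)$, identities are $a\mapsto\{a\}$. Pcas $A,B$ are isomorphic if there are applicative morphisms $\gamma:A\to B$, $\delta:B\to A$ with $\delta\gamma$ and $\gamma\delta$ equal to the identity morphisms. *)

Definition papp {A : Type} (app : A -> A -> option A) (x y : option A) : option A :=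
  match x, y with
  | Some a, Some b => app a b
  | _, _ => None
  end.

(* A partial combinatory algebra: a carrier with a partial binary application
   (None = undefined) and combinators K, S. Equalities of option values are
   Kleene equalities. *)
Record PCA : Type := {
  carrier :> Type;
  app : carrier -> carrier -> option carrier;
  pK : carrier;
  pS : carrier;
  K_ax : forall a b : carrier,
      papp app (papp app (Some pK) (Some a)) (Some b) = Some a;
  S_def : forall a b : carrier,
      papp app (papp app (Some pS) (Some a)) (Some b) <> None;
  S_ax : forall a b c : carrier,
      papp app (papp app (papp app (Some pS) (Some a)) (Some b)) (Some c)
      = papp app (papp app (Some a) (Some c)) (papp app (Some b) (Some c))
}.

Definition total (A : PCA) : Prop := forall a b : A, app A a b <> None.

Definition multifun (A B : PCA) : Type := A -> B -> Prop.

Definition applicative_morphism (A B : PCA) (g : multifun A B) : Prop :=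
  (forall a : A, exists b : B, g a b) /\
  exists r : B, forall (a a' d : A) (b b' : B),
    app A a a' = Some d -> g a b -> g a' b' ->
    exists c : B,
      papp (app B) (papp (app B) (Some r) (Some b)) (Some b') = Some c /\ g d c.

Definition comp_morph {A B C : PCA} (d : multifun B C) (g : multifun A B)
  : multifun A C := fun a c => exists b : B, g a b /\ d b c.

Definition id_morph (A : PCA) : multifun A A := fun a b => b = a.

Definition morph_eq {A B : PCA} (f g : multifun A B) : Prop :=
  forall a b, f a b <-> g a b.

Definition pca_isomorphic (A B : PCA) : Prop :=
  exists (g : multifun A B) (d : multifun B A),
    applicative_morphism A B g /\ applicative_morphism B A d /\
    morph_eq (comp_morph d g) (id_morph A) /\
    morph_eq (comp_morph g d) (id_morph B).

From Pilot Require Import Defs.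
From Stdlib Require Import List Lia Classical ClassicalEpsilon
  FunctionalExtensionality PropExtensionality ProofIrrelevance.
Import ListNotations.

(* Both pcas live on the same carrier: the sets of tokens of a graph model
   (Engeler's algebra) that contain a distinguished token [mark].  Graph-model
   application [tapp] is total and every Scott-continuous ternary operation is
   represented by a token set [code F], which yields [K] and [S].  In the total
   pca, [x y] is [tapp x y] with [mark] added; in the partial pca, [x y] is
   [tapp x y] itself and is defined only when it contains [mark].  The identity
   is then an applicative morphism in both directions: from the partial to the
   total pca because a defined partial application already contains [mark], and
   from the total to the partial pca with a realizer [r] such that [r a] and
   [r a b] always contain [mark] and [r a b] is [tapp a b] with [mark] added. *)

Inductive token : Type := mark | arrow (l : list token) (e : token).

Definition tset := token -> Prop.

Definition subset (x y : tset) : Prop := forall z, x z -> y z.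

Definition of_list (l : list token) : tset := fun z => In z l.

Definition tapp (x y : tset) : tset := fun e => exists l, Forall y l /\ x (arrow l e).

Lemma tset_ext (x y : tset) : (forall z, x z <-> y z) -> x = y.
Proof.
  intro H; apply functional_extensionality; intro z.
  apply propositional_extensionality; apply H.
Qed.

Lemma tapp_mono x x' y y' : subset x x' -> subset y y' -> subset (tapp x y) (tapp x' y').
Proof.
  intros hx hy e [l [hl hxl]]; exists l; split; [exact (Forall_impl _ hy hl) | auto].
Qed.

Definition op3 := tset -> tset -> tset -> tset.

Definition monotone3 (F : op3) : Prop := forall a b c a' b' c',
  subset a a' -> subset b b' -> subset c c' -> subset (F a b c) (F a' b' c').

Definition compact3 (F : op3) : Prop := forall a b c e, F a b c e ->
  exists la lb lc, Forall a la /\ Forall b lb /\ Forall c lc /\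
    F (of_list la) (of_list lb) (of_list lc) e.

Definition continuous3 (F : op3) : Prop := monotone3 F /\ compact3 F.

Lemma Forall_subset x l : Forall x l -> subset (of_list l) x.
Proof. rewrite Forall_forall; intros h z; apply h. Qed.

Lemma of_list_app_l l l' : subset (of_list l) (of_list (l ++ l')).
Proof. intros z hz; apply in_or_app; auto. Qed.

Lemma of_list_app_r l l' : subset (of_list l') (of_list (l ++ l')).
Proof. intros z hz; apply in_or_app; auto. Qed.

Lemma monotone3_app_l F la lb lc la' lb' lc' : monotone3 F ->
  subset (F (of_list la) (of_list lb) (of_list lc))
         (F (of_list (la ++ la')) (of_list (lb ++ lb')) (of_list (lc ++ lc'))).
Proof. intro hm; apply hm; apply of_list_app_l. Qed.

Lemma monotone3_app_r F la lb lc la' lb' lc' : monotone3 F ->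
  subset (F (of_list la') (of_list lb') (of_list lc'))
         (F (of_list (la ++ la')) (of_list (lb ++ lb')) (of_list (lc ++ lc'))).
Proof. intro hm; apply hm; apply of_list_app_r. Qed.

Lemma compact3_Forall F a b c l : continuous3 F -> Forall (F a b c) l ->
  exists la lb lc, Forall a la /\ Forall b lb /\ Forall c lc /\
    Forall (F (of_list la) (of_list lb) (of_list lc)) l.
Proof.
  intros [hm hc]; induction 1 as [|d l hd _ IH].
  - exists [], [], []; repeat constructor.
  - destruct (hc _ _ _ _ hd) as (la & lb & lc & ha & hb & hc' & hF).
    destruct IH as (la' & lb' & lc' & ha' & hb' & hc'' & hl).
    exists (la ++ la'), (lb ++ lb'), (lc ++ lc').
    repeat split; try (apply Forall_app; split; assumption).
    constructor; [exact (monotone3_app_l F _ _ _ la' lb' lc' hm _ hF) |].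
    exact (Forall_impl _ (monotone3_app_r F la lb lc _ _ _ hm) hl).
Qed.

Lemma continuous3_proj1 : continuous3 (fun a b c => a).
Proof.
  split; [intros ? ? ? ? ? ? h _ _; exact h |].
  intros a b c e h; exists [e], [], []; repeat split; repeat constructor; exact h.
Qed.

Lemma continuous3_proj2 : continuous3 (fun a b c => b).
Proof.
  split; [intros ? ? ? ? ? ? _ h _; exact h |].
  intros a b c e h; exists [], [e], []; repeat split; repeat constructor; exact h.
Qed.

Lemma continuous3_proj3 : continuous3 (fun a b c => c).
Proof.
  split; [intros ? ? ? ? ? ? _ _ h; exact h |].
  intros a b c e h; exists [], [], [e]; repeat split; repeat constructor; exact h.
Qed.

Lemma continuous3_tapp F G : continuous3 F -> continuous3 G ->
  continuous3 (fun a b c => tapp (F a b c) (G a b c)).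
Proof.
  intros hF hG; split.
  - intros a b c a' b' c' h1 h2 h3;
      apply tapp_mono; [apply (proj1 hF) | apply (proj1 hG)]; assumption.
  - intros a b c e [l [hl hx]].
    destruct (proj2 hF _ _ _ _ hx) as (la & lb & lc & ha & hb & hc & hFe).
    destruct (compact3_Forall G a b c l hG hl) as (la' & lb' & lc' & ha' & hb' & hc' & hGl).
    exists (la ++ la'), (lb ++ lb'), (lc ++ lc').
    repeat split; try (apply Forall_app; split; assumption).
    exists l; split.
    + exact (Forall_impl _ (monotone3_app_r G la lb lc _ _ _ (proj1 hG)) hGl).
    + exact (monotone3_app_l F _ _ _ la' lb' lc' (proj1 hF) _ hFe).
Qed.

Lemma continuous3_guard F G : continuous3 F -> continuous3 G ->
  continuous3 (fun a b c e => F a b c mark /\ G a b c e).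
Proof.
  intros hF hG; split.
  - intros a b c a' b' c' h1 h2 h3 e [u v]; split;
      [exact (proj1 hF _ _ _ _ _ _ h1 h2 h3 _ u) | exact (proj1 hG _ _ _ _ _ _ h1 h2 h3 _ v)].
  - intros a b c e [u v].
    destruct (proj2 hF _ _ _ _ u) as (la & lb & lc & ha & hb & hc & hFm).
    destruct (proj2 hG _ _ _ _ v) as (la' & lb' & lc' & ha' & hb' & hc' & hGe).
    exists (la ++ la'), (lb ++ lb'), (lc ++ lc').
    repeat split; try (apply Forall_app; split; assumption).
    + exact (monotone3_app_l F _ _ _ la' lb' lc' (proj1 hF) _ hFm).
    + exact (monotone3_app_r G la lb lc _ _ _ (proj1 hG) _ hGe).
Qed.

Definition code (F : op3) : tset := fun z => exists la lb lc e,
  z = arrow la (arrow lb (arrow lc e)) /\ F (of_list la) (of_list lb) (of_list lc) e.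

Lemma tapp3_code F a b c : continuous3 F -> tapp (tapp (tapp (code F) a) b) c = F a b c.
Proof.
  intros [hm hc]; apply tset_ext; intro e; split.
  - intros (lc & hlc & lb & hlb & la & hla & la' & lb' & lc' & e' & heq & hF).
    injection heq as <- <- <- <-.
    eapply hm; [ | | | exact hF]; apply Forall_subset; assumption.
  - intro h; destruct (hc _ _ _ _ h) as (la & lb & lc & ha & hb & hc' & hF).
    exists lc; split; [exact hc' |]; exists lb; split; [exact hb |].
    exists la; split; [exact ha |]; exists la, lb, lc, e; split; [reflexivity | exact hF].
Qed.

Fixpoint nil_arrows (k : nat) : token :=
  match k with
  | O => mark
  | S k => arrow [] (nil_arrows k)
  end.

(* [defer n z] and its applications to at most [n] arguments all contain
   [mark]: this is what makes [S a] and [S a b] defined in the partial pca. *)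
Definition defer (n : nat) (z : tset) : tset :=
  fun e => (exists k, k <= n /\ e = nil_arrows k) \/ z e.

Lemma defer_mark n z : defer n z mark.
Proof. left; exists 0; split; [lia | reflexivity]. Qed.

Lemma tapp_defer n z y : tapp (defer (S n) z) y = defer n (tapp z y).
Proof.
  apply tset_ext; intro e; split.
  - intros [l [hl [[[|k] [hk heq]] | hz]]]; [discriminate | |].
    + injection heq as -> ->; left; exists k; split; [lia | reflexivity].
    + right; exists l; auto.
  - intros [[k [hk ->]] | [l [hl hz]]].
    + exists []; split; [constructor |]; left; exists (S k); split; [lia | reflexivity].
    + exists l; split; [exact hl | right; exact hz].
Qed.

Lemma tapp_defer0 z y : tapp (defer 0 z) y = tapp z y.
Proof.
  apply tset_ext; intro e; split.
  - intros [l [hl [[[|k] [hk heq]] | hz]]]; [discriminate | lia |].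
    exists l; auto.
  - intros [l [hl hz]]; exists l; split; [exact hl | right; exact hz].
Qed.

Lemma defer0_marked x : x mark -> defer 0 x = x.
Proof.
  intro hx; apply tset_ext; intro e; split; [| intro; right; assumption].
  intros [[[|k] [hk ->]] | h]; [exact hx | lia | exact h].
Qed.

Lemma continuous3_defer n F : continuous3 F -> continuous3 (fun a b c => defer n (F a b c)).
Proof.
  intros [hm hc]; split.
  - intros a b c a' b' c' h1 h2 h3 e [h | h];
      [left; exact h | right; exact (hm _ _ _ _ _ _ h1 h2 h3 _ h)].
  - intros a b c e [h | h].
    + exists [], [], []; do 3 (split; [constructor |]); left; exact h.
    + destruct (hc _ _ _ _ h) as (la & lb & lc & ha & hb & hc' & hF).
      exists la, lb, lc; repeat split; try assumption; right; exact hF.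
Qed.

Definition constant (a : tset) : tset := fun e => exists l t, e = arrow l t /\ a t.

Lemma tapp_constant a b : tapp (constant a) b = a.
Proof.
  apply tset_ext; intro e; split.
  - intros [l [_ [l' [t [heq ht]]]]]; injection heq as _ <-; exact ht.
  - intro h; exists []; split; [constructor | exists [], e; auto].
Qed.

Definition Kcode : tset := fun z => exists l l' t, z = arrow l (arrow l' t) /\ In t l.

Lemma tapp_Kcode a : tapp Kcode a = constant a.
Proof.
  apply tset_ext; intro e; split.
  - intros [l [hl [l0 [l' [t [heq hin]]]]]]; injection heq as -> ->.
    exists l', t; split; [reflexivity | exact (Forall_subset _ _ hl t hin)].
  - intros [l' [t [-> ht]]]; exists [t]; split; [repeat constructor; exact ht |].
    exists [t], l', t; split; [reflexivity | left; reflexivity].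
Qed.

Definition ident : tset := fun z => exists e, z = arrow [e] e.

Lemma tapp_ident a : tapp ident a = a.
Proof.
  apply tset_ext; intro e; split.
  - intros [l [hl [e' heq]]]; injection heq as -> ->; inversion hl; assumption.
  - intro h; exists [e]; split; [repeat constructor; exact h | exists e; reflexivity].
Qed.

Record pset : Type := { elems : tset; has_mark : elems mark }.

Lemma pset_ext (x y : pset) : elems x = elems y -> x = y.
Proof.
  destruct x as [x hx], y as [y hy]; simpl; intros ->.
  f_equal; apply proof_irrelevance.
Qed.

Definition defer_p (n : nat) (z : tset) : pset := {| has_mark := defer_mark n z |}.

Definition total_app (x y : pset) : option pset := Some (defer_p 0 (tapp (elems x) (elems y))).

Definition total_S_op : op3 :=
  fun a b c => tapp (tapp a c) (defer 0 (tapp b c)).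

Lemma continuous3_total_S_op : continuous3 total_S_op.
Proof.
  apply continuous3_tapp; [| apply continuous3_defer];
    apply continuous3_tapp; auto using continuous3_proj1, continuous3_proj2, continuous3_proj3.
Qed.

Lemma total_K_ax (a b : pset) :
  papp total_app (papp total_app (Some (defer_p 1 Kcode)) (Some a)) (Some b) = Some a.
Proof.
  cbv [papp total_app]; f_equal; apply pset_ext; cbn.
  rewrite tapp_defer, !tapp_defer0, tapp_Kcode, tapp_constant.
  exact (defer0_marked _ (has_mark a)).
Qed.

Lemma total_S_ax (a b c : pset) :
  papp total_app (papp total_app (papp total_app
    (Some (defer_p 0 (code total_S_op))) (Some a)) (Some b)) (Some c)
  = papp total_app (papp total_app (Some a) (Some c)) (papp total_app (Some b) (Some c)).
Proof.
  cbv [papp total_app]; f_equal; apply pset_ext; cbn.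
  rewrite !tapp_defer0, tapp3_code by exact continuous3_total_S_op; reflexivity.
Qed.

Definition total_model : PCA :=
  Build_PCA pset total_app (defer_p 1 Kcode) (defer_p 0 (code total_S_op))
    total_K_ax (fun a b => ltac:(discriminate)) total_S_ax.

Lemma total_model_total : total total_model.
Proof. intros a b; discriminate. Qed.

Definition pointed_part (z : tset) : option pset :=
  match excluded_middle_informative (z mark) with
  | left h => Some {| elems := z; has_mark := h |}
  | right _ => None
  end.

Lemma pointed_part_mark z (h : z mark) : pointed_part z = Some {| elems := z; has_mark := h |}.
Proof.
  unfold pointed_part; destruct (excluded_middle_informative _); [| contradiction].
  f_equal; apply pset_ext; reflexivity.
Qed.

Lemma pointed_part_unmarked z : ~ z mark -> pointed_part z = None.
Proof. unfold pointed_part; destruct (excluded_middle_informative _); tauto. Qed.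

Lemma pointed_part_elems (d : pset) : pointed_part (elems d) = Some d.
Proof. destruct d as [z h]; apply pointed_part_mark. Qed.

Lemma pointed_part_Some z d : pointed_part z = Some d -> elems d = z.
Proof.
  unfold pointed_part; destruct (excluded_middle_informative _); intro e; inversion e; reflexivity.
Qed.

Definition partial_app (x y : pset) : option pset := pointed_part (tapp (elems x) (elems y)).

Definition guarded_app (z w : tset) : tset := fun e => z mark /\ w mark /\ tapp z w e.

Lemma papp_Some {T : Type} (f : T -> T -> option T) x y : papp f (Some x) (Some y) = f x y.
Proof. reflexivity. Qed.

Lemma papp_pointed_part z w :
  papp partial_app (pointed_part z) (pointed_part w) = pointed_part (guarded_app z w).
Proof.
  destruct (classic (z mark)) as [hz | hz]; [destruct (classic (w mark)) as [hw | hw] |].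
  - rewrite (pointed_part_mark z hz), (pointed_part_mark w hw), papp_Some.
    unfold partial_app; f_equal; apply tset_ext; unfold guarded_app; simpl; tauto.
  - rewrite (pointed_part_unmarked w hw), (pointed_part_unmarked (guarded_app z w))
      by (unfold guarded_app; tauto).
    destruct (pointed_part z); reflexivity.
  - rewrite (pointed_part_unmarked z hz), (pointed_part_unmarked (guarded_app z w))
      by (unfold guarded_app; tauto).
    reflexivity.
Qed.

Lemma partial_app_defer n z x :
  partial_app (defer_p (S n) z) x = Some (defer_p n (tapp z (elems x))).
Proof. unfold partial_app; simpl; rewrite tapp_defer; apply pointed_part_mark. Qed.

Lemma partial_app_defer0 z x : partial_app (defer_p 0 z) x = pointed_part (tapp z (elems x)).
Proof. unfold partial_app; simpl; rewrite tapp_defer0; reflexivity. Qed.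

Definition partial_S_op : op3 := fun a b c => guarded_app (tapp a c) (tapp b c).

Lemma continuous3_partial_S_op : continuous3 partial_S_op.
Proof.
  unfold partial_S_op, guarded_app.
  apply (continuous3_guard (fun a b c => tapp a c)),
    (continuous3_guard (fun a b c => tapp b c) (fun a b c => tapp (tapp a c) (tapp b c)));
    repeat apply continuous3_tapp;
    auto using continuous3_proj1, continuous3_proj2, continuous3_proj3.
Qed.

Lemma partial_K_ax (a b : pset) :
  papp partial_app (papp partial_app (Some (defer_p 1 Kcode)) (Some a)) (Some b) = Some a.
Proof.
  rewrite papp_Some, partial_app_defer, papp_Some, partial_app_defer0.
  rewrite tapp_Kcode, tapp_constant; apply pointed_part_elems.
Qed.

Lemma partial_S_def (a b : pset) :
  papp partial_app (papp partial_app (Some (defer_p 2 (code partial_S_op))) (Some a)) (Some b)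
  <> None.
Proof. rewrite papp_Some, partial_app_defer, papp_Some, partial_app_defer; discriminate. Qed.

Lemma partial_S_ax (a b c : pset) :
  papp partial_app (papp partial_app (papp partial_app
    (Some (defer_p 2 (code partial_S_op))) (Some a)) (Some b)) (Some c)
  = papp partial_app (papp partial_app (Some a) (Some c)) (papp partial_app (Some b) (Some c)).
Proof.
  rewrite !papp_Some, partial_app_defer, papp_Some, partial_app_defer, papp_Some,
    partial_app_defer0, tapp3_code by exact continuous3_partial_S_op.
  unfold partial_app; rewrite papp_pointed_part; reflexivity.
Qed.

Definition partial_model : PCA :=
  Build_PCA pset partial_app (defer_p 1 Kcode) (defer_p 2 (code partial_S_op))
    partial_K_ax partial_S_def partial_S_ax.

Lemma partial_model_not_total : ~ total partial_model.
Proof.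
  intro H; apply (H (defer_p 0 (fun _ => False)) (defer_p 0 (fun _ => False))).
  cbn; rewrite partial_app_defer0; apply pointed_part_unmarked.
  intros [l [_ []]].
Qed.

Lemma id_applicative_total_partial :
  applicative_morphism total_model partial_model (id_morph total_model).
Proof.
  split; [intro a; exists a; reflexivity |].
  exists (defer_p 2 ident); intros a a' d b b' H -> ->.
  injection H as <-; exists (defer_p 0 (tapp (elems a) (elems a'))); split; [| reflexivity].
  cbn; rewrite partial_app_defer, papp_Some, partial_app_defer, tapp_ident; reflexivity.
Qed.

Lemma id_applicative_partial_total :
  applicative_morphism partial_model total_model (id_morph partial_model).
Proof.
  split; [intro a; exists a; reflexivity |].
  exists (defer_p 0 ident); intros a a' d b b' H -> ->.
  exists d; split; [| reflexivity].
  cbv [papp total_model Defs.app total_app]; f_equal; apply pset_ext; cbn.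
  rewrite !tapp_defer0, tapp_ident, <- (pointed_part_Some _ _ H).
  apply defer0_marked, has_mark.
Qed.

Lemma comp_id_morph (P : PCA) : morph_eq (comp_morph (id_morph P) (id_morph P)) (id_morph P).
Proof.
  intros a b; unfold comp_morph, id_morph; split; [intros [c [-> ->]]; reflexivity |].
  intros ->; exists a; split; reflexivity.
Qed.

Theorem mainTheorem7 :
  exists A B : PCA, total A /\ ~ total B /\ pca_isomorphic A B.
Proof.
  exists total_model, partial_model.
  split; [exact total_model_total |].
  split; [exact partial_model_not_total |].
  exists (id_morph total_model), (id_morph partial_model).
  split; [exact id_applicative_total_partial |].
  split; [exact id_applicative_partial_total |].
  split; [exact (comp_id_morph total_model) | exact (comp_id_morph partial_model)].
Qed.
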